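(* Let $\mu,\nu$ be probability distributions on a finite set with $\mathrm{supp}\,\mu\subseteq\mathrm{supp}\,\nu$, and let $\epsilon\in[0,1]$. Then \[ D\big((1-\epsilon)\mu+\epsilon\nu\,\big\|\,\nu\big)\le(1-\epsilon)D(\mu\|\nu)-\big(1-\nu(\mathrm{supp}\,\mu)\big)\,\epsilon\log\frac1\epsilon, \] with the convention $0\log\frac10=0$.
   Context: $D(\mu\|\nu)=\sum_{x}\mu(x)\log_2\frac{\mu(x)}{\nu(x)}$ is the Kullback–Leibler divergence; $\mathrm{supp}\,\mu$ is the support of $\mu$ and $\nu(S)=\sum_{x\in S}\nu(x)$. *)

(* classical reals. A finite set is {0,...,n-1}; distributions
   are functions nat -> R, only their values on i < n matter. *)
From Stdlib Require Import Reals Lra.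
Open Scope R_scope.

Fixpoint sumR (n : nat) (f : nat -> R) : R :=
  match n with
  | O => 0
  | S k => sumR k f + f k
  end.

Definition log2 (x : R) : R := ln x / ln 2.

Definition is_prob (n : nat) (mu : nat -> R) : Prop :=
  (forall i, (i < n)%nat -> 0 <= mu i) /\ sumR n mu = 1.

Definition supp_sub (n : nat) (mu nu : nat -> R) : Prop :=
  forall i, (i < n)%nat -> mu i <> 0 -> nu i <> 0.

Definition KL (n : nat) (mu nu : nat -> R) : R :=
  sumR n (fun i => if Rlt_dec 0 (mu i) then mu i * log2 (mu i / nu i) else 0).

Definition mass_on_supp (n : nat) (mu nu : nat -> R) : R :=
  sumR n (fun i => if Rlt_dec 0 (mu i) then nu i else 0).

Definition xlog1x (x : R) : R := if Rlt_dec 0 x then x * log2 (1 / x) else 0.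

(* Pointwise in i, with p := (1 - eps) mu + eps nu: on supp mu the map
   x |-> x log (x / nu) is convex, so p log (p / nu) <= (1 - eps) mu log (mu / nu);
   off supp mu the term is eps nu log eps.  Summing, the second kind of term
   contributes -(1 - nu(supp mu)) eps log (1 / eps). *)
From Stdlib Require Import Reals Lra Lia.
Open Scope R_scope.

Lemma sumR_le n f g :
  (forall i, (i < n)%nat -> f i <= g i) -> sumR n f <= sumR n g.
Proof.
  induction n as [|n IH]; simpl; intros Hfg; [lra|].
  assert (sumR n f <= sumR n g) by (apply IH; intros; apply Hfg; lia).
  assert (f n <= g n) by (apply Hfg; lia).
  lra.
Qed.

Lemma sumR_lin n f g a b :
  sumR n (fun i => a * f i + b * g i) = a * sumR n f + b * sumR n g.
Proof. induction n as [|n IH]; simpl; [|rewrite IH]; ring. Qed.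

Lemma sumR_split_if n (P : nat -> Prop) (dec : forall i, {P i} + {~ P i}) f :
  sumR n (fun i => if dec i then f i else 0)
  + sumR n (fun i => if dec i then 0 else f i) = sumR n f.
Proof.
  induction n as [|n IH]; simpl; [ring|].
  rewrite <- IH; destruct (dec n); ring.
Qed.

Lemma ln_le_sub1 x : 0 < x -> ln x <= x - 1.
Proof.
  intros Hx; pose proof (exp_ineq1_le (ln x)) as H.
  rewrite exp_ln in H; lra.
Qed.

Lemma ln2_pos : 0 < ln 2.
Proof. pose proof ln_lt_2; lra. Qed.

Lemma log2_div_chain x y z :
  0 < x -> 0 < y -> 0 < z -> log2 (x / z) = log2 (x / y) + log2 (y / z).
Proof.
  intros Hx Hy Hz; unfold log2.
  replace (x / z) with ((x / y) * (y / z)) by (field; lra).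
  rewrite ln_mult by (apply Rdiv_lt_0_compat; lra).
  field; pose proof ln2_pos; lra.
Qed.

Lemma mul_log2_ratio_le a b :
  0 < a -> 0 < b -> a * log2 (b / a) <= (b - a) / ln 2.
Proof.
  intros Ha Hb; pose proof ln2_pos.
  pose proof (ln_le_sub1 (b / a) (Rdiv_lt_0_compat _ _ Hb Ha)) as Hln.
  unfold log2, Rdiv in *.
  apply Rmult_le_compat_r with (r := / ln 2) in Hln;
    [|apply Rlt_le, Rinv_0_lt_compat; lra].
  replace ((b - a) * / ln 2) with (a * ((b * / a - 1) * / ln 2)) by (field; lra).
  apply Rmult_le_compat_l; lra.
Qed.

Definition kl_term (p q : R) : R := if Rlt_dec 0 p then p * log2 (p / q) else 0.

Lemma KL_sumR n mu nu : KL n mu nu = sumR n (fun i => kl_term (mu i) (nu i)).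
Proof. reflexivity. Qed.

Section Mixture.

Variables (m v e : R).
Hypotheses (He0 : 0 <= e) (He1 : e <= 1).

Let p := (1 - e) * m + e * v.

Lemma mix_pos : 0 < m -> 0 < v -> 0 < p.
Proof.
  intros Hm Hv; unfold p; destruct (Req_dec e 1) as [->|He]; [lra|].
  assert (0 < (1 - e) * m) by (apply Rmult_lt_0_compat; lra).
  assert (0 <= e * v) by (apply Rmult_le_pos; lra).
  lra.
Qed.

(* Convexity of [x |-> x log (x / v)] between [m] and [v], where it vanishes. *)
Lemma mix_log2_ratio_le :
  0 < m -> 0 < v -> p * log2 (p / v) <= (1 - e) * (m * log2 (m / v)).
Proof.
  intros Hm Hv; pose proof (mix_pos Hm Hv) as Hp.
  pose proof (mul_log2_ratio_le m p Hm Hp) as Hmp.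
  pose proof (mul_log2_ratio_le v p Hv Hp) as Hvp.
  assert (Hsplit : p * log2 (p / v)
    = (1 - e) * (m * log2 (p / m)) + (1 - e) * (m * log2 (m / v))
      + e * (v * log2 (p / v))).
  { rewrite (log2_div_chain p m v) by lra; unfold p; ring. }
  assert (Hsum : (1 - e) * ((p - m) / ln 2) + e * ((p - v) / ln 2) = 0).
  { unfold p; field; pose proof ln2_pos; lra. }
  apply Rmult_le_compat_l with (r := 1 - e) in Hmp; [|lra].
  apply Rmult_le_compat_l with (r := e) in Hvp; [|lra].
  lra.
Qed.

Lemma kl_term_mix_le :
  0 <= m -> 0 <= v -> (m <> 0 -> v <> 0) ->
  kl_term p v <= (1 - e) * kl_term m v - (if Rlt_dec 0 m then 0 else v) * xlog1x e.
Proof.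
  intros Hm Hv Hsupp; unfold kl_term, xlog1x.
  destruct (Rlt_dec 0 m) as [Hm'|Hm'].
  - assert (Hv' : 0 < v) by (destruct Hv; auto; exfalso; apply Hsupp; lra).
    pose proof (mix_log2_ratio_le Hm' Hv'); pose proof (mix_pos Hm' Hv').
    destruct (Rlt_dec 0 p); lra.
  - assert (Hp : p = e * v) by (unfold p; replace m with 0 by lra; ring).
    rewrite Hp.
    destruct (Rlt_dec 0 (e * v)) as [Hev|Hev], (Rlt_dec 0 e) as [He|He].
    + assert (0 < v) by (destruct Hv as [|<-]; auto; lra).
      replace (e * v / v) with e by (field; lra).
      unfold log2, Rdiv; rewrite Rmult_1_l, ln_Rinv by lra; lra.
    + assert (e = 0) by lra; subst e; lra.
    + assert (v = 0) by (destruct Hv; auto; exfalso; apply Hev, Rmult_lt_0_compat; lra).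
      subst v; lra.
    + assert (e = 0) by lra; subst e; lra.
Qed.

End Mixture.

Lemma mass_off_supp n mu nu :
  is_prob n nu ->
  sumR n (fun i => if Rlt_dec 0 (mu i) then 0 else nu i) = 1 - mass_on_supp n mu nu.
Proof.
  intros [_ Hnu1]; unfold mass_on_supp.
  rewrite <- Hnu1, <- (sumR_split_if n _ (fun i => Rlt_dec 0 (mu i)) nu); ring.
Qed.

Theorem lemma6 (n : nat) (mu nu : nat -> R) (eps : R)
  (Hmu : is_prob n mu) (Hnu : is_prob n nu) (Hsupp : supp_sub n mu nu)
  (He0 : 0 <= eps) (He1 : eps <= 1) :
  KL n (fun i => (1 - eps) * mu i + eps * nu i) nu
  <= (1 - eps) * KL n mu nu - (1 - mass_on_supp n mu nu) * xlog1x eps.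
Proof.
  rewrite <- (mass_off_supp n mu nu Hnu), !KL_sumR.
  replace ((1 - eps) * _ - _ * xlog1x eps)
    with (sumR n (fun i => (1 - eps) * kl_term (mu i) (nu i)
            + (- xlog1x eps) * (if Rlt_dec 0 (mu i) then 0 else nu i)))
    by (rewrite sumR_lin; ring).
  apply sumR_le; intros i Hi.
  destruct Hmu as [Hmu0 _], Hnu as [Hnu0 _].
  pose proof (kl_term_mix_le (mu i) (nu i) eps He0 He1 (Hmu0 i Hi) (Hnu0 i Hi) (Hsupp i Hi)).
  lra.
Qed.
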